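(* For every integer $l\ge 3$ there is no Neumaier graph with parameters $(6l+3,\,4l+2,\,3l;\,l+1,\,2l+1)$.
   Context: All graphs are finite, simple, undirected. A regular graph is $\lambda$-edge-regular if it has at least one edge and any two adjacent vertices have exactly $\lambda$ common neighbours. An edge-regular graph with parameters $(v,k,\lambda)$ has $v$ vertices, is $k$-regular and $\lambda$-edge-regular. For a regular graph, a clique $S$ is $e$-regular ($e>0$) if every vertex outside $S$ has exactly $e$ neighbours in $S$. A Neumaier graph with parameters $(v,k,\lambda;e,s)$ is a non-complete edge-regular graph with parameters $(v,k,\lambda)$ containing an $e$-regular clique of size $s$. *)

From mathcomp Require Import all_boot.
Set Implicit Arguments. Unset Strict Implicit. Unset Printing Implicit Defensive.

Definition simple_graph (T : finType) (e : rel T) : Prop :=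
  symmetric e /\ irreflexive e.

Definition nbhd (T : finType) (e : rel T) (x : T) : {set T} := [set y | e x y].

Definition regular (T : finType) (e : rel T) (k : nat) : Prop :=
  forall x : T, #|nbhd e x| = k.

Definition edge_regular (T : finType) (e : rel T) (v k lam : nat) : Prop :=
  [/\ #|T| = v, regular e k, (exists x y : T, e x y) &
      forall x y : T, e x y -> #|nbhd e x :&: nbhd e y| = lam].

Definition is_clique (T : finType) (e : rel T) (S : {set T}) : Prop :=
  forall x y : T, x \in S -> y \in S -> x != y -> e x y.

Definition regular_clique (T : finType) (e : rel T) (S : {set T}) (ee : nat) : Prop :=
  [/\ 0 < ee, is_clique e S &
      forall x : T, x \notin S -> #|nbhd e x :&: S| = ee].

Definition complete (T : finType) (e : rel T) : Prop :=
  forall x y : T, x != y -> e x y.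

Definition neumaier (T : finType) (e : rel T) (v k lam ee s : nat) : Prop :=
  [/\ simple_graph e, ~ complete e, edge_regular e v k lam &
      exists S : {set T}, #|S| = s /\ regular_clique e S ee].

From mathcomp Require Import all_boot zify.

(* Let S be the (l+1)-regular clique of size 2l+1.  For a vertex z outside S let
   W(z) be the set of vertices outside S, distinct from and not adjacent to z,
   and for two vertices let common z w be the number of their common neighbours
   in S.  Edge-regularity shows that every neighbour x of z in S has exactly one
   neighbour in W(z); double counting then gives
     \sum_(w in W(z)) common z w = l + 1,   with |W(z)| = l.
   Two (l+1)-subsets of S meet, so each term is >= 1, hence at least l-1 >= 2
   terms equal 1.  If common z w = 1 then w is adjacent to every vertex of S not
   adjacent to z, so two such vertices w1, w2 have >= l common neighbours in S.
   If w1 ~ w2, their neighbourhoods outside S also overlap in >= 2l+1 vertices,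
   exceeding lambda = 3l; if not, w2 lies in W(w1) and the sum for w1 is at
   least (l-1) + l > l + 1. *)

Set Implicit Arguments.
Unset Strict Implicit.
Unset Printing Implicit Defensive.

Lemma card_setI_sum (I : finType) (A B : {set I}) :
  #|A :&: B| = \sum_(x in A) (x \in B).
Proof.
rewrite -sum1_card (eq_bigl (fun x => (x \in A) && (x \in B))) => [|x]; last by rewrite inE.
by rewrite big_mkcondr; apply: eq_bigr => x _; case: (x \in B).
Qed.

Lemma card_inter_lb (I : finType) (A B C : {set I}) :
  A \subset C -> B \subset C -> #|A| + #|B| <= #|A :&: B| + #|C|.
Proof.
move=> AC BC; rewrite -cardsUI addnC leq_add2l.
by apply: subset_leq_card; rewrite subUset AC.
Qed.

Lemma sum_lb_low_count (I : finType) (A : {set I}) (f : I -> nat) :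
  (forall u, u \in A -> 0 < f u) ->
  2 * #|A| <= \sum_(u in A) f u + #|[set u in A | f u <= 1]|.
Proof.
move=> f_pos; rewrite setIdE card_setI_sum mulnC -sum_nat_const -big_split /=.
apply: leq_sum => u uA; rewrite inE; have := f_pos u uA.
by case: (leqP (f u) 1); lia.
Qed.

Lemma sum_lb_point (I : finType) (A : {set I}) (f : I -> nat) (j : I) :
  (forall u, u \in A -> 0 < f u) -> j \in A ->
  #|A| + (f j).-1 <= \sum_(u in A) f u.
Proof.
move=> f_pos jA; rewrite (big_setD1 j jA) (cardsD1 j A) jA add1n /=.
have : #|A :\ j| <= \sum_(u in A :\ j) f u.
  by rewrite -sum1_card; apply: leq_sum => u /setD1P[_ /f_pos].
by have := f_pos j jA; lia.
Qed.

Section NeumaierCounting.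

Variables (T : finType) (e : rel T) (k lam ee : nat) (S : {set T}).
Hypotheses (e_sym : symmetric e) (e_irr : irreflexive e).
Hypothesis e_reg : regular e k.
Hypothesis e_lam : forall x y, e x y -> #|nbhd e x :&: nbhd e y| = lam.
Hypothesis S_clique : is_clique e S.
Hypothesis S_reg : forall x, x \notin S -> #|nbhd e x :&: S| = ee.

Local Notation N := (nbhd e).

Lemma card_nbhd_outside x : x \notin S -> #|N x :\: S| = k - ee.
Proof. by move=> xS; have := cardsID S (N x); rewrite e_reg S_reg //; lia. Qed.

Lemma clique_nbhd x : x \in S -> N x :&: S = S :\ x.
Proof.
move=> xS; apply/setP => y; rewrite !inE.
case: (eqVneq y x) => [->|yx]; first by rewrite e_irr.
by case yS: (y \in S); rewrite ?andbF //= andbT S_clique // eq_sym.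
Qed.

Definition outer_nonnbrs (z : T) : {set T} := (~: S :\: N z) :\ z.

Lemma in_outer_nonnbrs z w :
  (w \in outer_nonnbrs z) = [&& w != z, ~~ e z w & w \notin S].
Proof. by rewrite !inE. Qed.

Lemma card_outer_nonnbrs z :
  z \notin S -> #|outer_nonnbrs z| + (k - ee) + 1 = #|T| - #|S|.
Proof.
move=> zS; have := cardsC S; have := cardsID (N z) (~: S).
rewrite setIC -setDE card_nbhd_outside //.
have := cardsD1 z (~: S :\: N z); rewrite /outer_nonnbrs !inE zS e_irr /=; lia.
Qed.

(* Each neighbour x of z in S has exactly k + ee - lam - |S| - 1 neighbours
   in W(z): count the neighbours of x outside S via edge-regularity at zx. *)
Lemma card_partners z x : z \notin S -> x \in S -> e z x ->
  #|outer_nonnbrs z :&: N x| + lam + #|S| + 1 = k + ee.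
Proof.
move=> zS xS zx.
have common_in_S : #|N z :&: N x :&: S| + 1 = ee.
  rewrite -setIA clique_nbhd // setIDA; have := cardsD1 x (N z :&: S).
  by rewrite !inE zx xS S_reg //; lia.
have x_outside : #|N x :\: S| + #|S| = k + 1.
  have := cardsID S (N x); have := cardsD1 x S.
  by rewrite clique_nbhd // e_reg xS; lia.
have lam_split := cardsID S (N z :&: N x); rewrite e_lam // in lam_split.
have out_split := cardsID (N z) (N x :\: S).
rewrite setIDAC setIC in out_split.
have z_removed := cardsD1 z (N x :\: S :\: N z).
rewrite !inE e_sym zx zS e_irr /= in z_removed.
have -> : outer_nonnbrs z :&: N x = N x :\: S :\: N z :\ z.
  by apply/setP => y; rewrite !inE; case: (y == z); case: (e z y); case: (e x y).
lia.
Qed.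

Definition common (z w : T) : nat := #|N z :&: N w :&: S|.

(* Two vertices outside S each see ee vertices of S, so they share at least
   2ee - |S| of them. *)
Lemma common_lb z w : z \notin S -> w \notin S -> 2 * ee <= common z w + #|S|.
Proof.
move=> zS wS; rewrite /common setIIl.
by have := card_inter_lb (subsetIr (N z) S) (subsetIr (N w) S); rewrite !S_reg //; lia.
Qed.

(* If z and w share as few neighbours in S as possible, then w is adjacent to
   every vertex of S missed by z (a missed vertex would raise the bound). *)
Lemma low_common_dominates z w : z \notin S -> w \notin S ->
  common z w + #|S| <= 2 * ee -> {subset S :\: N z <= N w}.
Proof.
move=> zS wS low y; rewrite !inE => /andP[zy yS]; apply/negPn/negP => wy.
have avoid_y v : ~~ e v y -> N v :&: S \subset S :\ y.
  move=> vy; apply/subsetP => u; rewrite !inE => /andP[vu ->]; rewrite andbT.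
  by apply: contraTneq vu => ->.
have := card_inter_lb (avoid_y z zy) (avoid_y w wy); have := cardsD1 y S.
by move: low; rewrite /common setIIl !S_reg // yS; lia.
Qed.

(* Two vertices adjacent to all of S \ N(z) share its |S| - ee vertices. *)
Lemma dominating_common z w1 w2 : z \notin S ->
  {subset S :\: N z <= N w1} -> {subset S :\: N z <= N w2} ->
  #|S| <= ee + common w1 w2.
Proof.
move=> zS dom1 dom2; have := cardsID (N z) S; rewrite setIC S_reg //.
have : #|S :\: N z| <= common w1 w2.
  apply/subset_leq_card/subsetP => y yNS; have /setDP[yS _] := yNS.
  by rewrite !in_setI dom1 // dom2 // yS.
lia.
Qed.

(* Double counting of pairs (x, w), x in N(z) :&: S, w in W(z), x ~ w. *)
Lemma sum_common z : z \notin S ->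
  \sum_(w in outer_nonnbrs z) common z w = ee * (k + ee - (lam + #|S| + 1)).
Proof.
move=> zS.
transitivity (\sum_(w in outer_nonnbrs z) \sum_(x in N z :&: S) (x \in N w)).
  by apply: eq_bigr => w _; rewrite /common setIAC card_setI_sum.
rewrite exchange_big /= -{1}(S_reg zS) -sum_nat_const.
apply: eq_bigr => x; rewrite !inE => /andP[zx xS].
have -> : \sum_(w in outer_nonnbrs z) (x \in N w) = #|outer_nonnbrs z :&: N x|.
  by rewrite card_setI_sum; apply: eq_bigr => w _; rewrite !inE e_sym.
by have := card_partners zS xS zx; lia.
Qed.

(* Adjacent vertices w1, w2 of W(z) have common neighbours both in S and among
   the vertices outside S other than z, where their neighbourhoods are large;
   edge-regularity bounds the total by lam. *)
Lemma adjacent_common_ub z w1 w2 : z \notin S ->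
  w1 \in outer_nonnbrs z -> w2 \in outer_nonnbrs z -> e w1 w2 ->
  common w1 w2 + 2 * (k - ee) + #|S| + 1 <= lam + #|T|.
Proof.
move=> zS; rewrite !in_outer_nonnbrs => /and3P[_ zw1 w1S] /and3P[_ zw2 w2S] w12.
have lam_split := cardsID S (N w1 :&: N w2); rewrite e_lam // setDIl in lam_split.
have avoid_z v : ~~ e z v -> N v :\: S \subset ~: S :\ z.
  move=> zv; apply/subsetP => y; rewrite !inE => /andP[-> vy]; rewrite andbT.
  by apply: contraTneq vy => ->; rewrite e_sym.
have := card_inter_lb (avoid_z w1 zw1) (avoid_z w2 zw2).
have := cardsD1 z (~: S); have := cardsC S.
by rewrite !card_nbhd_outside // inE zS; rewrite /common in lam_split *; lia.
Qed.

End NeumaierCounting.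

Theorem mainTheorem3 (l : nat) : 3 <= l ->
  forall (T : finType) (e : rel T),
    ~ neumaier e (6 * l + 3) (4 * l + 2) (3 * l) (l + 1) (2 * l + 1).
Proof.
move=> hl T e [[e_sym e_irr] _ [cardT e_reg _ e_lam] [S [cardS [_ S_clique S_reg]]]].
have W_out z w : w \in outer_nonnbrs e S z -> w \notin S.
  by rewrite in_outer_nonnbrs => /and3P[].
have card_W z : z \notin S -> #|outer_nonnbrs e S z| = l.
  by move/(card_outer_nonnbrs e_irr e_reg S_reg); rewrite cardT cardS; lia.
have sum_W z : z \notin S -> \sum_(w in outer_nonnbrs e S z) common e S z w = l + 1.
  by move/(sum_common e_sym e_irr e_reg e_lam S_clique S_reg) ->; rewrite cardS; nia.
have common_pos z w : z \notin S -> w \notin S -> 0 < common e S z w.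
  by move=> zS wS; have := common_lb S_reg zS wS; rewrite cardS; lia.
have [z zS] : exists z, z \notin S.
  have /set0Pn[z] : ~: S != set0 by rewrite -card_gt0; have := cardsC S; lia.
  by rewrite inE; exists z.
(* The vertices w of W(z) with common z w = 1; there are at least l - 1 >= 2. *)
pose good := [set w in outer_nonnbrs e S z | common e S z w <= 1].
have [w1 [w2 [w1g w2g w12]]] : exists w1 w2, [/\ w1 \in good, w2 \in good & w1 != w2].
  apply/card_gt1P; have := sum_lb_low_count (fun w wW => common_pos z w zS (W_out z w wW)).
  by rewrite /good card_W // sum_W //; lia.
have dom w : w \in good -> {subset S :\: nbhd e z <= nbhd e w}.
  rewrite inE => /andP[wW low]; apply: (low_common_dominates S_reg zS (W_out z w wW)).
  by move: low; rewrite cardS; lia.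
have common_w12 : l <= common e S w1 w2.
  by have := dominating_common S_reg zS (dom w1 w1g) (dom w2 w2g); rewrite cardS; lia.
have [w1W w2W] : w1 \in outer_nonnbrs e S z /\ w2 \in outer_nonnbrs e S z.
  by move: w1g w2g; rewrite !inE => /andP[-> _] /andP[-> _].
(* Either w1 ~ w2, or w2 lies in W(w1) and dominates the sum over W(w1). *)
case: (boolP (e w1 w2)) => [adj | nadj].
  have := adjacent_common_ub e_sym e_reg e_lam S_reg zS w1W w2W adj.
  by rewrite cardT cardS; lia.
have w2W1 : w2 \in outer_nonnbrs e S w1 by rewrite in_outer_nonnbrs eq_sym w12 nadj (W_out z).
have w1S := W_out z w1 w1W.
have := sum_lb_point (fun w wW => common_pos w1 w w1S (W_out w1 w wW)) w2W1.
by rewrite card_W // sum_W //; lia.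
Qed.
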